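(* For $\alpha\ge0$ let $f(r^2)=1+\frac{r^2}{1+r^2}$, $q(u,v)=1+\alpha(\tfrac13u^2+\tfrac23v^2)$, $$a(u,v)=\frac{q(u,v)^2}{f(u^2+v^2)^2},\quad b(u,v)=\frac{q(u,v)^{5/2}}{f(u^2+v^2)^3},\quad \mathcal B(s,u,v)=1+u^2+v^2-a(u,v)s^2+b(u,v)s^3 .$$ Then for every $(u,v)\in\mathbb{R}^2$, as a function of $s$, $\mathcal B$ has a nondegenerate local maximum at $s=0$ with value $h(u,v)=1+u^2+v^2$, a local minimum at $s_m=\tfrac{2a}{3b}$ with value $\mathcal B(s_m,u,v)=1+u^2+v^2-\tfrac{4}{27}q(u,v)$, and returns to the value $h$ first at $s_b=a/b$ (with positive $s$-derivative there); the separatrix action is $$\jmath(u,v)=\int_0^{a/b}\sqrt{2(h(u,v)-\mathcal B(s,u,v))}\,ds=\frac{4\sqrt2\,a^{5/2}}{15\,b^2}=\frac{4\sqrt2}{15}f(u^2+v^2),$$ which depends only on $h$. Hence any divergence-free field realising $\mathcal B$ as its field strength in fieldline coordinates $(s,u,v)$ is weakly isodrastic, while for $\alpha\neq0$ the minimum value $\mathcal B(s_m,u,v)$ of the field strength along fieldlines is not constant on the level sets $\{h=\mathrm{const}\}$, so such a field is not omnigenous.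
   Context: Fieldline coordinates: $(u,v)$ label fieldlines and $s$ is signed arclength along them from the transverse surface $s=0$, which plays the role of $\Sigma^-$ (the set of nondegenerate local maxima of field strength along fieldlines). A field realising $\mathcal B$ is weakly isodrastic if the separatrix action $\jmath$ is constant on level sets of $h=|B|$ on $\Sigma^-$; omnigenity (for fields with flux function, here $h$) requires in particular that the minimum of $|B|$ along fieldlines be the same for all fieldlines of a flux surface. *)

From Stdlib Require Import Reals Lra.
From Coquelicot Require Import Coquelicot.
Open Scope R_scope.

(* f(r^2) = 1 + r^2/(1+r^2), as a function of t = r^2 *)
Definition fK (t : R) : R := 1 + t / (1 + t).

Definition qK (alpha u v : R) : R := 1 + alpha * (/3 * u^2 + 2/3 * v^2).

Definition aK (alpha u v : R) : R := (qK alpha u v)^2 / (fK (u^2 + v^2))^2.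

Definition bK (alpha u v : R) : R :=
  Rpower (qK alpha u v) (5/2) / (fK (u^2 + v^2))^3.

Definition BK (alpha s u v : R) : R :=
  1 + u^2 + v^2 - aK alpha u v * s^2 + bK alpha u v * s^3.

Definition hK (u v : R) : R := 1 + u^2 + v^2.

Definition s_min (alpha u v : R) : R := 2 * aK alpha u v / (3 * bK alpha u v).
Definition s_bounce (alpha u v : R) : R := aK alpha u v / bK alpha u v.

Definition jK (alpha u v : R) : R :=
  RInt (fun s => sqrt (2 * (hK u v - BK alpha s u v))) 0 (s_bounce alpha u v).

Definition Bmin (alpha u v : R) : R := BK alpha (s_min alpha u v) u v.

From Stdlib Require Import Reals Lra.
From Coquelicot Require Import Coquelicot.
Open Scope R_scope.

(* Along each fieldline B is the cubic h - a s^2 + b s^3 = h - s^2 (a - b s), so the well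
   between the maximum at 0 and the return point a/b is explicit, with minimum
   h - 4 a^3 / (27 b^2) at 2a/(3b).  The substitution w = a - b s turns the action
   int_0^{a/b} s sqrt (2 (a - b s)) ds into a polynomial in w^{1/2}, with value
   4 sqrt 2 a^{5/2} / (15 b^2).  The coefficients a = q^2/f^2 and b = q^{5/2}/f^3 are
   tuned so that a^{5/2}/b^2 = f and a^3/b^2 = q: the action depends on (u,v) only
   through u^2 + v^2 = h - 1, whereas the well depth 4q/27 also sees the anisotropy
   alpha (u^2/3 + 2 v^2/3), which varies along the circles h = const when alpha <> 0. *)

Definition cubic (c a b s : R) : R := c - a * s^2 + b * s^3.

Lemma BK_cubic (alpha s u v : R) :
  BK alpha s u v = cubic (hK u v) (aK alpha u v) (bK alpha u v) s.
Proof. reflexivity. Qed.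

Section Cubic.

Variables c a b : R.

Lemma is_derive_cubic (s : R) : is_derive (cubic c a b) s (s * (3 * b * s - 2 * a)).
Proof. unfold cubic; auto_derive; [easy | ring]. Qed.

Lemma is_derive_cubic_0 : is_derive (cubic c a b) 0 0.
Proof. pose proof (is_derive_cubic 0) as H; rewrite Rmult_0_l in H; exact H. Qed.

Lemma Derive_2_cubic_0 : Derive_n (cubic c a b) 2 0 = -2 * a.
Proof.
simpl; rewrite (Derive_ext _ (fun s => s * (3 * b * s - 2 * a))).
- apply is_derive_unique; auto_derive; [easy | ring].
- intros s; apply is_derive_unique, is_derive_cubic.
Qed.

Lemma depth_cubic (s : R) : c - cubic c a b s = s^2 * (a - b * s).
Proof. unfold cubic; ring. Qed.

Hypothesis a_gt0 : 0 < a.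
Hypothesis b_gt0 : 0 < b.

Lemma mul_lt_of_lt_div (s : R) : s < a / b -> b * s < a.
Proof.
intros Hs; apply (Rmult_lt_compat_l b) in Hs; [|lra].
replace (b * (a / b)) with a in Hs by (field; lra); exact Hs.
Qed.

Lemma cubic_local_max_0 :
  exists eps, 0 < eps /\ forall s, Rabs s < eps -> cubic c a b s <= cubic c a b 0.
Proof.
exists (a / b); split; [apply Rdiv_lt_0_compat; lra|].
intros s Hs; apply Rabs_def2 in Hs as [Hs _].
pose proof (depth_cubic s); pose proof (mul_lt_of_lt_div s Hs); pose proof (pow2_ge_0 s).
replace (cubic c a b 0) with c by (unfold cubic; ring); nra.
Qed.

Lemma cubic_bounce : cubic c a b (a / b) = c.
Proof. unfold cubic; field; lra. Qed.

Lemma cubic_lt_in_well (s : R) : 0 < s < a / b -> cubic c a b s < c.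
Proof.
intros [Hs0 Hs]; pose proof (depth_cubic s); pose proof (mul_lt_of_lt_div s Hs).
assert (0 < s^2) by (apply pow_lt; lra).
nra.
Qed.

Lemma is_derive_cubic_bounce : is_derive (cubic c a b) (a / b) (a^2 / b).
Proof.
pose proof (is_derive_cubic (a / b)) as H.
replace (_ * _) with (a^2 / b) in H by (field; lra); exact H.
Qed.

Let s_m := 2 * a / (3 * b).

Lemma is_derive_cubic_min : is_derive (cubic c a b) s_m 0.
Proof.
pose proof (is_derive_cubic s_m) as H.
replace (_ * _) with 0 in H by (unfold s_m; field; lra); exact H.
Qed.

Lemma cubic_min_value : cubic c a b s_m = c - 4/27 * (a^3 / b^2).
Proof. unfold cubic, s_m; field; lra. Qed.

Lemma cubic_local_min :
  exists eps, 0 < eps /\ forall s, Rabs (s - s_m) < eps -> cubic c a b s_m <= cubic c a b s.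
Proof.
assert (Hsm : 0 < s_m) by (unfold s_m; apply Rdiv_lt_0_compat; lra).
exists s_m; split; [exact Hsm|]; intros s Hs; apply Rabs_def2 in Hs.
(* s_m is a double root of B - B(s_m), the third root being -s_m/2 *)
replace (cubic c a b s) with (cubic c a b s_m + b * (s - s_m)^2 * (s + s_m / 2))
  by (unfold cubic, s_m; field; lra).
assert (0 <= b * (s - s_m)^2 * (s + s_m / 2)).
{ apply Rmult_le_pos; [apply Rmult_le_pos; [lra | apply pow2_ge_0] | lra]. }
lra.
Qed.

End Cubic.

Lemma is_derive_mul_sqrt (t : R) : 0 <= t -> is_derive (fun x => x * sqrt x) t (3/2 * sqrt t).
Proof.
intros Ht; destruct (Rle_lt_or_eq_dec _ _ Ht) as [Htpos | <-].
- pose proof (sqrt_lt_R0 t Htpos); pose proof (sqrt_sqrt t Ht) as Hsq.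
  auto_derive; [lra|]; set (r := sqrt t) in *; rewrite <- Hsq; field; lra.
- (* the difference quotient at 0 is sqrt h, which is small for |h| < eps^2 *)
  rewrite sqrt_0, Rmult_0_r; apply is_derive_Reals; intros eps Heps.
  exists (mkposreal (eps * eps) (Rmult_lt_0_compat _ _ Heps Heps)); intros h Hh0 Hh; simpl in Hh.
  replace ((0 + h) * sqrt (0 + h) - 0 * sqrt 0) with (h * sqrt h) by (rewrite Rplus_0_l; ring).
  replace (h * sqrt h / h - 0) with (sqrt h) by (field; auto).
  rewrite Rabs_right; [|apply Rle_ge, sqrt_pos].
  destruct (Rle_or_lt h 0) as [Hneg | Hpos].
  + rewrite (sqrt_neg_0 h Hneg); lra.
  + rewrite <- (sqrt_Rsqr eps) by lra; apply sqrt_lt_1; try lra.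
    all: rewrite Rabs_right in Hh by lra; unfold Rsqr; lra.
Qed.

Definition action_primitive (a w : R) : R :=
  2 * a / 3 * (w * sqrt w) - 2 / 5 * (w * (w * sqrt w)).

Lemma is_derive_action_primitive (a w : R) :
  0 <= w -> is_derive (action_primitive a) w ((a - w) * sqrt w).
Proof.
intros Hw; pose proof (is_derive_mul_sqrt w Hw) as H32.
pose proof (is_derive_mult (fun x => x) _ w _ _ (is_derive_id w) H32 Rmult_comm) as H52.
pose proof (is_derive_minus _ _ w _ _ (is_derive_scal _ _ (2 * a / 3) _ H32)
                                      (is_derive_scal _ _ (2 / 5) _ H52)) as H.
simpl in H; unfold minus, plus, opp, mult in H; simpl in H.
replace ((a - w) * sqrt w) with
  (2 * a / 3 * (3 / 2 * sqrt w) + - (2 / 5 * (1 * (w * sqrt w) + w * (3 / 2 * sqrt w))))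
  by field.
exact H.
Qed.

Lemma is_RInt_cubic_action (c a b : R) : 0 < a -> 0 < b ->
  is_RInt (fun s => sqrt (2 * (c - cubic c a b s))) 0 (a / b)
    (4 * sqrt 2 * (a^2 * sqrt a) / (15 * b^2)).
Proof.
intros Ha Hb.
set (F := fun s => - (sqrt 2 / b^2) * action_primitive a (a - b * s)).
replace (4 * sqrt 2 * (a^2 * sqrt a) / (15 * b^2)) with (minus (F (a / b)) (F 0)).
2:{ unfold F, action_primitive, minus, plus, opp; simpl.
    replace (a - b * (a / b)) with 0 by (field; lra); rewrite sqrt_0.
    replace (a - b * 0) with a by ring; field; lra. }
apply (@is_RInt_derive R_CompleteNormedModule F).
- intros s Hs; rewrite Rmin_left, Rmax_right in Hs by (apply Rlt_le, Rdiv_lt_0_compat; lra).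
  assert (Hw : 0 <= a - b * s).
  { assert (b * s <= b * (a / b)) by (apply Rmult_le_compat_l; lra).
    replace (b * (a / b)) with a in H by (field; lra); lra. }
  assert (Hlin : is_derive (fun s => a - b * s) s (- b)) by (auto_derive; [easy | ring]).
  pose proof (is_derive_scal _ s (- (sqrt 2 / b^2)) _
    (is_derive_comp _ _ s _ _ (is_derive_action_primitive a _ Hw) Hlin)) as HF.
  simpl in HF; unfold scal in HF; simpl in HF; unfold mult in HF; simpl in HF.
  rewrite depth_cubic.
  replace (2 * (s^2 * (a - b * s))) with (s^2 * (2 * (a - b * s))) by ring.
  rewrite sqrt_mult, sqrt_pow2, sqrt_mult by (try apply pow2_ge_0; lra).
  replace (s * (sqrt 2 * sqrt (a - b * s))) with
    (- (sqrt 2 / b ^ 2) * (- b * ((a - (a - b * s)) * sqrt (a - b * s)))) by (field; lra).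
  exact HF.
- intros s _; apply continuous_sqrt_comp, (@ex_derive_continuous R_AbsRing R_NormedModule).
  unfold cubic; auto_derive; easy.
Qed.

Lemma Rpower_five_halves (x : R) : 0 < x -> Rpower x (5/2) = x^2 * sqrt x.
Proof.
intros Hx; replace (5/2) with (INR 2 + /2) by (simpl; field).
rewrite Rpower_plus, Rpower_pow, Rpower_sqrt; auto.
Qed.

Lemma qK_ge1 (alpha u v : R) : 0 <= alpha -> 1 <= qK alpha u v.
Proof.
intros Halpha; unfold qK; pose proof (pow2_ge_0 u); pose proof (pow2_ge_0 v); nra.
Qed.

Lemma fK_ge1 (t : R) : 0 <= t -> 1 <= fK t.
Proof.
intros Ht; unfold fK.
assert (0 <= t / (1 + t)) by (apply Rdiv_le_0_compat; lra); lra.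
Qed.

Section Coefficients.

Variables alpha u v : R.
Hypothesis alpha_ge0 : 0 <= alpha.

Let q := qK alpha u v.
Let f := fK (u^2 + v^2).

Let q_gt0 : 0 < q.
Proof. pose proof (qK_ge1 alpha u v alpha_ge0); unfold q; lra. Qed.

Let f_gt0 : 0 < f.
Proof.
assert (0 <= u^2 + v^2) by (pose proof (pow2_ge_0 u); pose proof (pow2_ge_0 v); lra).
pose proof (fK_ge1 _ H); unfold f; lra.
Qed.

Let sqrt_q_gt0 : 0 < sqrt q.
Proof. apply sqrt_lt_R0, q_gt0. Qed.

Let sqrt_q_sq : sqrt q * sqrt q = q.
Proof. apply sqrt_sqrt; pose proof q_gt0; lra. Qed.

Lemma aK_gt0 : 0 < aK alpha u v.
Proof. unfold aK; fold q f; apply Rdiv_lt_0_compat; apply pow_lt; lra. Qed.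

Lemma sqrt_aK : sqrt (aK alpha u v) = q / f.
Proof.
unfold aK; fold q f; replace (q^2 / f^2) with ((q / f)^2) by (field; lra).
apply sqrt_pow2, Rdiv_le_0_compat; lra.
Qed.

Lemma bK_eq : bK alpha u v = q^2 * sqrt q / f^3.
Proof. unfold bK; fold q f; rewrite Rpower_five_halves; [reflexivity | lra]. Qed.

Lemma bK_gt0 : 0 < bK alpha u v.
Proof.
rewrite bK_eq; apply Rdiv_lt_0_compat; [apply Rmult_lt_0_compat; [apply pow_lt|]|apply pow_lt]; lra.
Qed.

Lemma aK_cube_div_bK_sq : aK alpha u v ^ 3 / bK alpha u v ^ 2 = q.
Proof.
rewrite bK_eq; unfold aK; fold q f.
set (p := sqrt q) in *; rewrite <- sqrt_q_sq; field; lra.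
Qed.

Lemma action_value :
  4 * sqrt 2 * Rpower (aK alpha u v) (5/2) / (15 * bK alpha u v ^ 2) = 4 * sqrt 2 / 15 * f.
Proof.
rewrite Rpower_five_halves by exact aK_gt0.
rewrite sqrt_aK, bK_eq; unfold aK; fold q f.
set (p := sqrt q) in *; rewrite <- sqrt_q_sq; field; lra.
Qed.

End Coefficients.

Lemma is_RInt_separatrix_action (alpha u v : R) : 0 <= alpha ->
  is_RInt (fun s => sqrt (2 * (hK u v - BK alpha s u v))) 0 (s_bounce alpha u v)
    (4 * sqrt 2 * Rpower (aK alpha u v) (5/2) / (15 * bK alpha u v ^ 2)).
Proof.
intros Halpha; rewrite Rpower_five_halves by exact (aK_gt0 alpha u v Halpha).
exact (is_RInt_cubic_action _ _ _ (aK_gt0 alpha u v Halpha) (bK_gt0 alpha u v Halpha)).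
Qed.

Lemma jK_eq (alpha u v : R) : 0 <= alpha -> jK alpha u v = 4 * sqrt 2 / 15 * fK (u^2 + v^2).
Proof.
intros Halpha; rewrite <- (action_value alpha u v Halpha).
apply is_RInt_unique, is_RInt_separatrix_action, Halpha.
Qed.

Lemma Bmin_eq (alpha u v : R) : 0 <= alpha -> Bmin alpha u v = hK u v - 4/27 * qK alpha u v.
Proof.
intros Halpha; pose proof (bK_gt0 alpha u v Halpha).
unfold Bmin, s_min; rewrite BK_cubic, cubic_min_value by assumption.
rewrite aK_cube_div_bK_sq by exact Halpha; reflexivity.
Qed.

Theorem mainTheorem8 (alpha : R) (Halpha : 0 <= alpha) :
  (forall u v : R,
     BK alpha 0 u v = hK u v /\
     is_derive (fun s => BK alpha s u v) 0 0 /\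
     Derive_n (fun s => BK alpha s u v) 2 0 < 0 /\
     (exists eps : R, 0 < eps /\
        forall s, Rabs s < eps -> BK alpha s u v <= BK alpha 0 u v) /\
     is_derive (fun s => BK alpha s u v) (s_min alpha u v) 0 /\
     (exists eps : R, 0 < eps /\
        forall s, Rabs (s - s_min alpha u v) < eps ->
          BK alpha (s_min alpha u v) u v <= BK alpha s u v) /\
     BK alpha (s_min alpha u v) u v = hK u v - 4/27 * qK alpha u v /\
     0 < s_bounce alpha u v /\
     BK alpha (s_bounce alpha u v) u v = hK u v /\
     (forall s, 0 < s < s_bounce alpha u v -> BK alpha s u v < hK u v) /\
     (exists d : R, is_derive (fun s => BK alpha s u v) (s_bounce alpha u v) d /\ 0 < d) /\
     is_RInt (fun s => sqrt (2 * (hK u v - BK alpha s u v))) 0 (s_bounce alpha u v)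
       (4 * sqrt 2 * Rpower (aK alpha u v) (5/2) / (15 * (bK alpha u v)^2)) /\
     4 * sqrt 2 * Rpower (aK alpha u v) (5/2) / (15 * (bK alpha u v)^2)
       = 4 * sqrt 2 / 15 * fK (u^2 + v^2) /\
     jK alpha u v = 4 * sqrt 2 / 15 * fK (u^2 + v^2)) /\
  (forall u v u' v' : R, hK u v = hK u' v' -> jK alpha u v = jK alpha u' v') /\
  (alpha <> 0 ->
     exists u v u' v' : R, hK u v = hK u' v' /\ Bmin alpha u v <> Bmin alpha u' v').
Proof.
split; [intros u v | split].
- pose proof (aK_gt0 alpha u v Halpha) as Ha; pose proof (bK_gt0 alpha u v Halpha) as Hb.
  pose proof (Bmin_eq alpha u v Halpha) as Hmin; unfold Bmin in Hmin.
  pose proof (is_RInt_separatrix_action alpha u v Halpha) as Hint.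
  pose proof (action_value alpha u v Halpha) as Hval.
  pose proof (jK_eq alpha u v Halpha) as Hj.
  unfold s_min, s_bounce in *.
  change (BK alpha) with (fun s u v => cubic (hK u v) (aK alpha u v) (bK alpha u v) s) in *.
  cbv beta in *.
  set (c := hK u v) in *; set (a := aK alpha u v) in *; set (b := bK alpha u v) in *.
  change (fun s => cubic c a b s) with (cubic c a b) in *.
  split; [unfold cubic; ring |].
  split; [apply is_derive_cubic_0 |].
  split; [rewrite Derive_2_cubic_0; lra |].
  split; [apply cubic_local_max_0; assumption |].
  split; [apply is_derive_cubic_min; assumption |].
  split; [apply cubic_local_min; assumption |].
  split; [exact Hmin |].
  split; [apply Rdiv_lt_0_compat; assumption |].
  split; [apply cubic_bounce; assumption |].
  split; [apply cubic_lt_in_well; assumption |].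
  split; [exists (a^2 / b); split; [apply is_derive_cubic_bounce; assumption |] |].
  { apply Rdiv_lt_0_compat; [apply pow_lt |]; assumption. }
  split; [exact Hint |]; split; [exact Hval | exact Hj].
- intros u v u' v' Hh; rewrite !jK_eq by exact Halpha.
  unfold hK in Hh; replace (u'^2 + v'^2) with (u^2 + v^2) by lra; reflexivity.
- (* (1,0) and (0,1) lie on the same circle but have different q *)
  intros Halpha0; exists 1, 0, 0, 1; split; [unfold hK; ring|].
  rewrite !Bmin_eq by exact Halpha; unfold hK, qK; intros E; apply Halpha0; nra.
Qed.
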